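(* Let $n\ge 2$ and let $a_1,\dots,a_n$ be positive integers. For $k\ge 1$ put $p_k=K(a_1,\dots,a_k)$, $q_k=K(a_2,\dots,a_k)$ and $r_k=K(a_3,\dots,a_k)$, so that $[a_1,\dots,a_n]=p_n/q_n$ and $[a_2,\dots,a_n]=q_n/r_n$. Then \[ [a_n,\dots,a_2,a_1,a_2,\dots,a_n]=\frac{p_n^2-r_n^2}{p_{n-1}p_n-r_{n-1}r_n}. \]
   Context: $[b_1,\dots,b_k]=b_1+\cfrac{1}{b_2+\cfrac{1}{\ddots+\cfrac{1}{b_k}}}$ denotes a continued fraction. For positive integers $a_i,\dots,a_j$, $K(a_i,\dots,a_j)$ denotes the continuant, i.e. the numerator of $[a_i,\dots,a_j]$ written in lowest terms; by convention $K(a_i,\dots,a_j)=1$ if $j=i-1$ (empty sequence) and $K(a_i,\dots,a_j)=0$ if $j=i-2$. *)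

From mathcomp Require Import all_boot all_order all_algebra.
Set Implicit Arguments. Unset Strict Implicit. Unset Printing Implicit Defensive.
Import GRing.Theory Num.Theory.
Local Open Scope ring_scope.

Fixpoint cont (s : seq nat) : nat :=
  match s with
  | [::] => 1%N
  | [:: x] => x
  | x :: ((_ :: t) as s') => (x * cont s' + cont t)%N
  end.

(* K(a_i, ..., a_j) for a sequence a indexed by nat (a_k = a k);
   K = 1 for the empty sequence j = i-1, K = 0 when j = i-2. *)
Definition K (a : nat -> nat) (i j : nat) : nat :=
  if (j.+2 == i)%N then 0%N
  else cont [seq a k | k <- iota i (j.+1 - i)].

Fixpoint cf (s : seq nat) : rat :=
  match s with
  | [::] => 0
  | [:: x] => x%:R
  | x :: s' => x%:R + (cf s')^-1
  end.

From mathcomp Require Import all_boot all_order all_algebra.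
From mathcomp Require Import zify ring.
Import GRing.Theory Num.Theory.
Local Open Scope ring_scope.

(* Continuants are the top-left entries of products of the symmetric matrices
   [[x, 1], [1, 0]]; transposing such a product reverses the sequence, so
   K(rev s) = K(s) and K(rev u ++ v) = K(u) K(v) + K(u') K(v'), where s' drops
   the first entry of s.  The palindrome w = rev (a_1 .. a_n) ++ (a_2 .. a_n)
   has value K(w) / K(w'), with K(w) = q_n (p_n + r_n) and
   K(w') = p_(n-1) q_n + q_(n-1) r_n.  Multiplying both by a_1 and using
   p_k = a_1 q_k + r_k turns this ratio into the stated one. *)

(* [cont_tail [::] = 0], matching the convention K = 0 for j = i - 2. *)
Definition cont_tail (s : seq nat) : nat := if s is _ :: t then cont t else 0.

Lemma cont_tail_cons x s : cont_tail (x :: s) = cont s.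
Proof. by []. Qed.

Lemma cont_cons x s : cont (x :: s) = (x * cont s + cont_tail s)%N.
Proof. by case: s => [|y t] /=; rewrite ?muln1 ?addn0. Qed.

Definition cont_step (x : nat) : 'M[nat]_2 :=
  \matrix_(i, j) nth 0 (nth [::] [:: [:: x; 1]; [:: 1; 0]] i) j.

Definition cont_mx (s : seq nat) : 'M[nat]_2 := foldr (fun x A => cont_step x *m A) 1%:M s.

Lemma mulmx2E (R : pzSemiRingType) (A B : 'M[R]_2) i j :
  (A *m B) i j = A i 0 * B 0 j + A i 1 * B 1 j.
Proof.
by rewrite mxE !big_ord_recl big_ord0 addr0 (_ : lift ord0 ord0 = 1) //; apply: val_inj.
Qed.

Lemma cont_mx_cat u v : cont_mx (u ++ v) = cont_mx u *m cont_mx v.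
Proof. by elim: u => [|x u IH] /=; rewrite ?mul1mx // IH mulmxA. Qed.

Lemma cont_mx_col0 s : cont_mx s 0 0 = cont s /\ cont_mx s 1 0 = cont_tail s.
Proof.
elim: s => [|x s [IH0 IH1]]; first by rewrite !mxE.
by rewrite cont_cons /= !mulmx2E !mxE /= IH0 IH1 !mul1r mul0r addr0.
Qed.

Lemma trmx_cont_step x : (cont_step x)^T = cont_step x.
Proof. by apply/matrixP => i j; rewrite !mxE; case: i j => [[|[|?]] ?] [[|[|?]] ?]. Qed.

Lemma trmx_cont_mx s : (cont_mx s)^T = cont_mx (rev s).
Proof.
elim: s => [|x s IH]; first by rewrite trmx1.
by rewrite rev_cons -cats1 cont_mx_cat /= trmx_mul IH trmx_cont_step mulmx1.
Qed.

Lemma cont_rev s : cont (rev s) = cont s.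
Proof. by rewrite -!(cont_mx_col0 _).1 -trmx_cont_mx mxE. Qed.

Lemma cont_cat u v : cont (u ++ v) = (cont u * cont v + cont_tail (rev u) * cont_tail v)%N.
Proof.
have M01 : cont_mx u 0 1 = cont_tail (rev u).
  by rewrite -[cont_mx u]trmxK trmx_cont_mx mxE (cont_mx_col0 _).2.
by rewrite -(cont_mx_col0 _).1 cont_mx_cat mulmx2E M01 !(cont_mx_col0 _).1 (cont_mx_col0 v).2.
Qed.

Lemma cont_rev_cat u v : cont (rev u ++ v) = (cont u * cont v + cont_tail u * cont_tail v)%N.
Proof. by rewrite cont_cat cont_rev revK. Qed.

Lemma cont_gt0 s : all (leq 1) s -> (0 < cont s)%N.
Proof.
elim: s => [|x s IH] // /andP [x_gt0 /IH s_gt0].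
by rewrite cont_cons ltn_addr // muln_gt0 x_gt0 s_gt0.
Qed.

Lemma cf_cons x s : all (leq 1) s -> cf (x :: s) = (cont (x :: s))%:R / (cont s)%:R.
Proof.
elim: s x => [|y s IH] x; first by rewrite divr1.
move=> /[dup] pos_ys /andP [_ pos_s].
have -> : cf [:: x, y & s] = x%:R + (cf (y :: s))^-1 by [].
have ys_neq0 : (cont (y :: s))%:R != 0 :> rat by rewrite pnatr_eq0 -lt0n cont_gt0.
rewrite IH // invf_div (cont_cons x) [cont_tail _]/= natrD natrM.
by field.
Qed.

Lemma K_cont a i l : K a i.+1 (i + l) = cont [seq a k | k <- iota i.+1 l].
Proof. by rewrite /K ifN ?subSS ?addKn //; lia. Qed.

Lemma K_tail a i l : K a i.+2 (i + l) = cont_tail [seq a k | k <- iota i.+1 l].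
Proof.
case: l => [|l]; first by rewrite /K addn0 eqxx.
by rewrite -addSnnS K_cont.
Qed.

Lemma palindrome_ratio (F : fieldType) (x q r q' r' : F) : x != 0 ->
  ((x * q + r) * q + q * r) / ((x * q' + r') * q + q' * r)
  = ((x * q + r) ^+ 2 - r ^+ 2) / ((x * q' + r') * (x * q + r) - r' * r).
Proof.
move=> x_neq0.
have -> : (x * q + r) ^+ 2 - r ^+ 2 = x * ((x * q + r) * q + q * r) by ring.
have -> : (x * q' + r') * (x * q + r) - r' * r = x * ((x * q' + r') * q + q' * r) by ring.
by rewrite -mulf_div mulfV ?mul1r.
Qed.

Theorem theorem3p15 (n : nat) (a : nat -> nat) :
  (2 <= n)%N ->
  (forall i, (1 <= i <= n)%N -> (0 < a i)%N) ->
  let p := fun k => (K a 1 k)%:R : rat in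
  let r := fun k => (K a 3 k)%:R : rat in
  cf ([seq a k | k <- rev (iota 1 n)] ++ [seq a k | k <- iota 2 n.-1])
  = (p n ^+ 2 - r n ^+ 2) / (p n.-1 * p n - r n.-1 * r n).
Proof.
case: n => [|[|m]] // _ a_gt0 p r; change m.+2.-1 with m.+1.
have iota_rcons : iota 1 m.+2 = rcons (iota 1 m.+1) m.+2 by rewrite -cats1 -{1}[m.+2]addn1 iotaD.
have pos : all (leq 1) (rev [seq a k | k <- iota 1 m.+1] ++ [seq a k | k <- iota 2 m.+1]).
  apply/allP => x; rewrite mem_cat mem_rev => /orP [] /mapP [k + ->];
    by rewrite mem_iota => k_range; apply: a_gt0; lia.
rewrite /p /r (K_cont a 0 m.+2) (K_cont a 0 m.+1) (K_tail a 1 m.+1) (K_tail a 1 m).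
rewrite map_rev iota_rcons map_rcons rev_rcons cat_cons cf_cons //.
rewrite -cat_cons -rev_rcons -map_rcons -iota_rcons !cont_rev_cat.
have map_iota1 l : [seq a k | k <- iota 1 l.+1] = a 1 :: [seq a k | k <- iota 2 l] by [].
rewrite !map_iota1 !(cont_cons (a 1)) !(cont_tail_cons (a 1)) !(natrD, natrM).
by apply: palindrome_ratio; rewrite pnatr_eq0 -lt0n a_gt0.
Qed.
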